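(* Let $G$ be a finite group and let $g\mapsto U_g$ be a unitary representation of $G$ on a finite-dimensional Hilbert space $\mathcal{H}$. Let $\mathcal{R}$ be a finite-dimensional reference Hilbert space, and suppose that, with $\hat{G}$ the set of inequivalent irreducible representations of $G$, there is a unitary identification $$\mathcal{H}\otimes\mathcal{R}\cong\bigoplus_{\mu\in\hat G}\mathcal{H}_\mu\otimes\mathbb{C}^{d_\mu},$$ under which $U_g\otimes I_{\mathcal{R}}$ acts as $\bigoplus_{\mu\in\hat G}U^\mu_g\otimes I_{\mathbb{C}^{d_\mu}}$, where $U^\mu$ is the irreducible representation $\mu$ on $\mathcal{H}_\mu$ and $d_\mu=\dim\mathcal{H}_\mu$. For each $\mu$ fix orthonormal bases $\{|\psi^\mu_j\rangle\}_{j=1}^{d_\mu}$ of $\mathcal{H}_\mu$ and $\{|\phi^\mu_j\rangle\}_{j=1}^{d_\mu}$ of $\mathbb{C}^{d_\mu}$, and let $|V_\mu\rangle\!\rangle:=\sum_{j=1}^{d_\mu}|\psi^\mu_j\rangle|\phi^\mu_j\rangle\in\mathcal{H}_\mu\otimes\mathbb{C}^{d_\mu}$. Let $$|\psi\rangle=\bigoplus_{\mu\in\hat G}\frac{a_\mu}{\sqrt{d_\mu}}|V_\mu\rangle\!\rangle\in\mathcal{H}\otimes\mathcal{R},\qquad a_\mu\in\mathbb{C},\ \sum_{\mu}|a_\mu|^2=1,$$ and let $\mu_0\in\hat G$ be such that $d_{\mu_0}|a_{\mu_0}|\ge d_\mu|a_\mu|$ for all $\mu\in\hat G$. For $g\in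 G$ set $|u_g\rangle:=(U_g\otimes I_{\mathcal{R}})|\psi\rangle$. If $$d_{\mu_0}|a_{\mu_0}|\le\sum_{\mu\in\hat G,\ \mu\neq\mu_0}d_\mu|a_\mu|,$$ then conclusive single-state exclusion of the set $\{|u_g\rangle: g\in G\}$ can be done, i.e., there exists a POVM $\{M_g\}_{g\in G}$ on $\mathcal{H}\otimes\mathcal{R}$ (so $M_g\ge 0$ and $\sum_{g\in G}M_g=I$) such that $\langle u_g|M_g|u_g\rangle=0$ for every $g\in G$.
   Context: Conclusive single-state exclusion of a finite set of pure states $\{|u_g\rangle\}_{g\in G}$ means the existence of a POVM $\{M_g\}_{g\in G}$ (positive semidefinite operators summing to the identity) with $\operatorname{tr}[M_g|u_g\rangle\langle u_g|]=0$ for all $g$; equivalently, the minimum of $\sum_g\operatorname{tr}[M_g|u_g\rangle\langle u_g|]$ over all POVMs is $0$. The vector $|V_\mu\rangle\!\rangle$ is an (unnormalized) maximally entangled vector between the irreducible space $\mathcal{H}_\mu$ and the multiplicity space $\mathbb{C}^{d_\mu}$. *)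

From HB Require Import structures.
From mathcomp Require Import all_boot all_order all_algebra all_fingroup algC.
From mathcomp Require Import mxrepresentation classfun.
Set Implicit Arguments.
Unset Strict Implicit.
Unset Printing Implicit Defensive.
Import GRing.Theory Num.Theory Num.Def.
Local Open Scope ring_scope.

(* A vector of C^T is a function T -> algC, and a
   linear map C^T2 -> C^T1 is its matrix, a function T1 -> T2 -> algC. *)
Definition lmap (T1 T2 : finType) := T1 -> T2 -> algC.

Definition lapply (T1 T2 : finType) (A : lmap T1 T2) (v : T2 -> algC)
  : T1 -> algC := fun x => \sum_y A x y * v y.

Definition lcomp (T1 T2 T3 : finType) (A : lmap T1 T2) (B : lmap T2 T3)
  : lmap T1 T3 := fun x z => \sum_y A x y * B y z.

Definition ladj (T1 T2 : finType) (A : lmap T1 T2) : lmap T2 T1 :=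
  fun y x => (A x y)^*.

Definition lid (T : finType) : lmap T T := fun x y => (x == y)%:R.

Definition inner (T : finType) (v w : T -> algC) : algC :=
  \sum_x (v x)^* * w x.

Definition lunitary (T1 T2 : finType) (W : lmap T1 T2) :=
  (forall y y', lcomp (ladj W) W y y' = lid y y') /\
  (forall x x', lcomp W (ladj W) x x' = lid x x').

Definition psd (T : finType) (A : lmap T T) :=
  forall v : T -> algC, 0 <= inner v (lapply A v).

Definition adjmx n (A : 'M[algC]_n) : 'M[algC]_n := (map_mx conjC A)^T.

Definition unitary_mx n (A : 'M[algC]_n) := A *m adjmx A = 1%:M.

(* A ⊗ I_R acting on C^n ⊗ C^m, the latter indexed by 'I_n * 'I_m *)
Definition tens_id n m (A : 'M[algC]_n) : lmap ('I_n * 'I_m)%type ('I_n * 'I_m)%type :=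
  fun x y => A x.1 y.1 * (x.2 == y.2)%:R.

(* The space ⊕_{μ ∈ I} H_μ ⊗ C^{d_μ}, with H_μ = C^{d_μ}: coordinates are
   triples (μ, j, k) with j, k < d μ. *)
Definition dsum_idx (I : finType) (d : I -> nat) : finType :=
  {i : I & ('I_(d i) * 'I_(d i))%type}.

(* entry of a square matrix at natural-number indices (0 out of range) *)
Definition mxnat p (A : 'M[algC]_p) (i j : nat) : algC :=
  match (insub i : option 'I_p), (insub j : option 'I_p) with
  | Some i', Some j' => A i' j'
  | _, _ => 0
  end.

(* ⊕_μ A_μ ⊗ I_{C^{d_μ}} *)
Definition blk_tens_id (I : finType) (d : I -> nat)
    (A : forall i, 'M[algC]_(d i)) : lmap (dsum_idx d) (dsum_idx d) :=
  fun x y =>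
    if tag x == tag y then
      mxnat (A (tag x)) (tagged x).1 (tagged y).1
        * ((nat_of_ord (tagged x).2 == nat_of_ord (tagged y).2))%:R
    else 0.

(* |V_μ>> = Σ_l |ψ^μ_l>|φ^μ_l>, where the l-th column of Psi (resp. Phi)
   is the coordinate vector of ψ^μ_l (resp. φ^μ_l). *)
Definition maxent p (Psi Phi : 'M[algC]_p) (j k : 'I_p) : algC :=
  \sum_(l < p) Psi j l * Phi k l.

Definition psi_dsum (I : finType) (d : I -> nat) (a : I -> algC)
    (Psi Phi : forall i, 'M[algC]_(d i)) : dsum_idx d -> algC :=
  fun x => a (tag x) / sqrtC (d (tag x))%:R
           * maxent (Psi (tag x)) (Phi (tag x)) (tagged x).1 (tagged x).2.

From HB Require Import structures.
From mathcomp Require Import all_boot all_order all_algebra all_fingroup algC.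
From mathcomp Require Import mxrepresentation classfun spectral.
From mathcomp Require Import ring lra.
Set Implicit Arguments.
Unset Strict Implicit.
Unset Printing Implicit Defensive.
Import GRing.Theory Num.Theory Num.Def.
Local Open Scope ring_scope.
Local Open Scope sesquilinear_scope.

(* Take M_g = |v_g><v_g| with v_g = (U_g ⊗ I) w, where w = ⊕_μ b_μ/√d_μ |V_μ>>
   has |b_μ| = d_μ/√|G|.  By Schur orthogonality the orbit of w under
   ⊕_μ U^μ_g ⊗ I is a tight frame, so Σ_g M_g = I, while <v_g|u_g> = <w|ψ>
   = Σ_μ b_μ^* a_μ.  Writing b_μ = y_μ^* d_μ/√|G| with |y_μ| = 1, exclusion
   amounts to Σ_μ y_μ d_μ a_μ = 0, i.e. to closing a polygon with side lengths
   d_μ|a_μ|, which is possible exactly when no side exceeds the sum of the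
   others. *)

Definition phase (w : algC) : algC := if w == 0 then 1 else w / `|w|.

Lemma normr_phase (w : algC) : `|phase w| = 1.
Proof.
rewrite /phase; case: eqP => [_|/eqP w0]; first exact: normr1.
by rewrite normf_div normr_id divff // normr_eq0.
Qed.

Lemma phaseE (w : algC) : w = phase w * `|w|.
Proof.
rewrite /phase; case: eqP => [->|/eqP w0]; first by rewrite normr0 mulr0.
by rewrite divfK ?normr_eq0.
Qed.

Lemma conj_phaseM (w : algC) : (phase w)^* * w = `|w|.
Proof. by rewrite {2}[w]phaseE mulrA -normCKC normr_phase expr1n mul1r. Qed.

Lemma normC_algR_rect (x y : algR) :
  `|algRval x + 'i * algRval y| = algRval (Num.sqrt (x ^+ 2 + y ^+ 2)).
Proof.
apply/eqP; rewrite -(eqrXn2 (n := 2)) //; last exact: (sqrtr_ge0 (x ^+ 2 + y ^+ 2)).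
rewrite normC2_rect ?algRvalP //.
by rewrite -!rmorphXn -rmorphD sqr_sqrtr // addr_ge0 ?sqr_ge0.
Qed.

(* With the side [A] on the real axis, the third vertex [x + i h] lies at
   distance [B] from [0] and [C] from [A]. *)
Lemma algR_triangle (A B C : algR) : 0 <= B -> 0 <= C ->
  B - C <= A -> C - B <= A -> A <= B + C ->
  exists zB zC : algC, [/\ `|zB| = 1, `|zC| = 1 &
    algRval A = zB * algRval B + zC * algRval C].
Proof.
move=> B0 C0 hBC hCB hA.
have [A0|Agt0] := eqVneq A 0.
  have -> : C = B by lra.
  exists 1, (-1); rewrite normrN normr1 A0; split => //; ring.
have A_gt0 : 0 < A by rewrite lt0r Agt0; lra.
pose x := (A ^+ 2 + B ^+ 2 - C ^+ 2) / (2 * A).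
have ex : 2 * A * x = A ^+ 2 + B ^+ 2 - C ^+ 2.
  by rewrite /x mulrC divfK // mulf_neq0 // pnatr_eq0.
have x2B : 0 <= B ^+ 2 - x ^+ 2.
  have heron : (2 * A) ^+ 2 * (B ^+ 2 - x ^+ 2) =
      (C ^+ 2 - (A - B) ^+ 2) * ((A + B) ^+ 2 - C ^+ 2).
    transitivity ((2 * A) ^+ 2 * B ^+ 2 - (2 * A * x) ^+ 2); first by ring.
    by rewrite ex; ring.
  rewrite -(pmulr_rge0 _ (exprn_gt0 2 (mulr_gt0 (ltr0n _ 2) A_gt0))) heron.
  by apply: mulr_ge0; nra.
pose h := Num.sqrt (B ^+ 2 - x ^+ 2).
have h2 : h ^+ 2 = B ^+ 2 - x ^+ 2 by rewrite sqr_sqrtr.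
have normB : `|algRval x + 'i * algRval h| = algRval B.
  by rewrite normC_algR_rect h2 addrC subrK sqrtr_sqr ger0_norm.
have normC : `|algRval (A - x) + 'i * algRval (- h)| = algRval C.
  rewrite normC_algR_rect sqrrN h2.
  have -> : (A - x) ^+ 2 + (B ^+ 2 - x ^+ 2) = C ^+ 2 by rewrite -[RHS]opprK; nra.
  by rewrite sqrtr_sqr ger0_norm.
exists (phase (algRval x + 'i * algRval h)).
exists (phase (algRval (A - x) + 'i * algRval (- h))).
split; rewrite ?normr_phase // -normB -normC -!phaseE rmorphB rmorphN /=; ring.
Qed.

Lemma balanced_signs (R : realDomainType) (I : eqType) (r : I -> R) (A : R)
    (s : seq I) :
  0 <= A -> uniq s -> {in s, forall i, 0 <= r i <= A} ->
  exists f : I -> bool, `|\sum_(i <- s) (if f i then r i else - r i)| <= A.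
Proof.
move=> A0; elim: s => [|i s IHs] /=.
  by move=> _ _; exists (fun _ => true); rewrite big_nil normr0.
case/andP=> s'i uniq_s r_s.
have [f] := IHs uniq_s (fun j sj => r_s j (mem_behead (s := i :: s) sj)).
set D := \sum_(j <- s) _ => leDA.
have /andP [ri0 riA] := r_s i (mem_head i s).
exists (fun j => if j == i then D < 0 else f j); rewrite big_cons eqxx.
have -> : \sum_(j <- s) (if (if j == i then D < 0 else f j) then r j else - r j) = D.
  by apply: eq_big_seq => j sj; case: eqP => // eji; rewrite -eji sj in s'i.
move: leDA; rewrite !ler_norml => /andP [? ?].
by case: ltrP => ?; apply/andP; split; lra.
Qed.

Lemma algR_polygon (I : finType) (r : I -> algR) (i0 : I) :
  (forall i, 0 <= r i) -> (forall i, r i <= r i0) ->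
  r i0 <= \sum_(i | i != i0) r i ->
  exists z : I -> algC, (forall i, `|z i| = 1) /\ \sum_i z i * algRval (r i) = 0.
Proof.
move=> r_ge0 r_le sum_ge.
have [f] := @balanced_signs _ _ r (r i0) (enum (predC1 i0)) (r_ge0 i0) (enum_uniq _)
  (fun i _ => introT andP (conj (r_ge0 i) (r_le i))).
pose B := \sum_(i | (i != i0) && f i) r i.
pose C := \sum_(i | (i != i0) && ~~ f i) r i.
have -> : \sum_(i <- enum (predC1 i0)) (if f i then r i else - r i) = B - C.
  rewrite big_enum (bigID f) -sumrN /=.
  by congr (_ + _); apply: eq_bigr => i /andP [_]; [move-> | move/negbTE->].
rewrite ler_norml => /andP [lo hi].
have sumBC : \sum_(i | i != i0) r i = B + C by rewrite (bigID f).
have [zB [zC [zB1 zC1 eA]]] := @algR_triangle (r i0) B C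
  (sumr_ge0 _ (fun i _ => r_ge0 i)) (sumr_ge0 _ (fun i _ => r_ge0 i))
  ltac:(lra) ltac:(lra) ltac:(lra).
exists (fun i => if i == i0 then -1 else if f i then zB else zC); split.
  by move=> i; case: eqP; case: (f i); rewrite ?normrN ?normr1.
rewrite (bigD1 i0) //= eqxx (bigID f) /= mulN1r eA !rmorph_sum !mulr_sumr.
apply/eqP; rewrite addrC subr_eq0; apply/eqP; congr (_ + _).
  by apply: eq_bigr => i /andP [/negbTE-> ->].
by apply: eq_bigr => i /andP [/negbTE-> /negbTE->].
Qed.

Lemma polygon_closure (I : finType) (w : I -> algC) (i0 : I) :
  (forall i, `|w i| <= `|w i0|) -> `|w i0| <= \sum_(i | i != i0) `|w i| ->
  exists y : I -> algC, (forall i, `|y i| = 1) /\ \sum_i y i * w i = 0.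
Proof.
move=> w_le sum_ge.
pose r i := in_algR (normr_real (w i)).
have [z [z1 z0]] : exists z : I -> algC,
    (forall i, `|z i| = 1) /\ \sum_i z i * algRval (r i) = 0.
  apply: (algR_polygon (i0 := i0)).
  - by move=> i; exact: normr_ge0.
  - exact: w_le.
  - by change (`|w i0| <= algRval (\sum_(i | i != i0) r i)); rewrite rmorph_sum.
exists (fun i => z i * (phase (w i))^*); split.
  by move=> i; rewrite normrM z1 norm_conjC normr_phase mulr1.
by rewrite -[RHS]z0; apply: eq_bigr => i _; rewrite -mulrA conj_phaseM.
Qed.

Lemma adjmxE n (A : 'M[algC]_n) : adjmx A = A ^t*.
Proof. by rewrite /adjmx map_trmx. Qed.

Lemma trmxC_mul p q r (A : 'M[algC]_(p, q)) (B : 'M[algC]_(q, r)) :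
  (A *m B) ^t* = B ^t* *m A ^t*.
Proof. by rewrite trmx_mul map_mxM. Qed.

Lemma trmxC_eq0 p q (A : 'M[algC]_(p, q)) : (A ^t* == 0) = (A == 0).
Proof. by rewrite map_mx_eq0 trmx_eq0. Qed.

Lemma trmxCZ p q (c : algC) (A : 'M[algC]_(p, q)) : (c *: A) ^t* = c^* *: A ^t*.
Proof. by apply/matrixP => i j; rewrite !mxE rmorphM. Qed.

Lemma maxent_isometry p (Psi Phi : 'M[algC]_p) : unitary_mx Psi -> unitary_mx Phi ->
  (Psi *m Phi^T) ^t* *m (Psi *m Phi^T) = 1%:M.
Proof.
move=> /mulmx1C uPsi uPhi.
rewrite trmxC_mul mulmxA -(mulmxA _ (Psi ^t*)) -[Psi ^t*]adjmxE uPsi mulmx1.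
have -> : Phi^T ^t* = (Phi ^t*)^T by rewrite map_trmx.
by rewrite -trmx_mul -[Phi ^t*]adjmxE uPhi trmx1.
Qed.

Lemma mulmx_trmxC_eq0 p q (A : 'M[algC]_(p, q)) : (A *m A ^t* == 0) = (A == 0).
Proof.
apply/idP/eqP => [/eqP AA0|->]; last by rewrite mul0mx.
have /eqP : \tr (A *m A ^t*) = 0 by rewrite AA0 mxtrace0.
rewrite /mxtrace psumr_eq0 => [/allP A0|i _]; last first.
  by rewrite !mxE sumr_ge0 // => j _; rewrite !mxE mul_conjC_ge0.
apply/matrixP => i j; have := A0 i (mem_index_enum i).
rewrite /= !mxE psumr_eq0 => [/allP/(_ j (mem_index_enum j))|k _]; last first.
  by rewrite !mxE mul_conjC_ge0.
by rewrite !mxE mul_conjC_eq0 => /eqP.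
Qed.

Section SchurOrthogonality.

Variables (gT : finGroupType) (G : {group gT}).

Definition unitary_repr p (r : mx_representation algC G p) :=
  forall g, g \in G -> unitary_mx (r g).

Lemma repr_mxV_unitary p (r : mx_representation algC G p) g :
  unitary_repr r -> g \in G -> r (g^-1)%g = (r g) ^t*.
Proof.
move=> ur Gg; have [r_unit _] := mulmx1_unit (ur g Gg).
by rewrite repr_mxV // -[invmx _]mulmx1 -(ur g Gg) mulmxA mulVmx // mul1mx adjmxE.
Qed.

Lemma unitary_intertwiner_rsim p q (r1 : mx_representation algC G p)
    (r2 : mx_representation algC G q) (T : 'M[algC]_(p, q)) :
  mx_irreducible r1 -> mx_irreducible r2 -> unitary_repr r1 -> unitary_repr r2 ->
  (forall g, g \in G -> r1 g *m T = T *m r2 g) -> T != 0 -> mx_rsim r1 r2.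
Proof.
move=> irr1 irr2 ur1 ur2 rT nzT.
have rTadj g : g \in G -> T ^t* *m r1 g = r2 g *m T ^t*.
  move=> Gg; have := rT _ (groupVr Gg).
  rewrite !repr_mxV_unitary // => /(congr1 (fun A => A ^t*)).
  by rewrite !trmxC_mul !trmxCK.
have cent1 : centgmx r1 (T *m T ^t*).
  by apply/centgmxP => g Gg; rewrite -mulmxA rTadj // !mulmxA rT.
have cent2 : centgmx r2 (T ^t* *m T).
  by apply/centgmxP => g Gg; rewrite -mulmxA -rT // !mulmxA rTadj.
have unit1 : T *m T ^t* \in unitmx.
  by apply: (mx_Schur irr1 cent1); rewrite mulmx_trmxC_eq0.
have unit2 : T ^t* *m T \in unitmx.
  by apply: (mx_Schur irr2 cent2); rewrite -{2}[T]trmxCK mulmx_trmxC_eq0 trmxC_eq0.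
have pT : (p <= \rank T)%N by rewrite -{1}(mxrank_unit unit1) mxrankM_maxl.
have qT : (q <= \rank T)%N by rewrite -{1}(mxrank_unit unit2) mxrankM_maxr.
have pq : p = q.
  apply/eqP; rewrite eqn_leq (leq_trans pT (rank_leq_col T)).
  by rewrite (leq_trans qT (rank_leq_row T)).
apply: (MxReprSim (B := T) pq) => //.
by rewrite /row_free eqn_leq pT rank_leq_row.
Qed.

Definition twirl p q (r1 : mx_representation algC G p)
    (r2 : mx_representation algC G q) (X : 'M[algC]_(p, q)) :=
  \sum_(g in G) r1 g *m X *m (r2 g) ^t*.

Lemma twirl_intertwines p q (r1 : mx_representation algC G p)
    (r2 : mx_representation algC G q) X h :
  unitary_repr r2 -> h \in G -> r1 h *m twirl r1 r2 X = twirl r1 r2 X *m r2 h.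
Proof.
move=> ur2 Gh; rewrite /twirl mulmx_sumr mulmx_suml [RHS](reindex_inj (mulgI h)) /=.
apply: eq_big => [g|g Gg]; first by rewrite groupMl.
rewrite -!repr_mxV_unitary ?groupM ?groupV // !mulmxA -repr_mxM //.
by rewrite -!mulmxA -repr_mxM ?groupV ?groupM // invMg -mulgA mulVg mulg1.
Qed.

Lemma twirl_rank1 p q (r1 : mx_representation algC G p)
    (r2 : mx_representation algC G q) (u : 'cV[algC]_p) (w : 'cV[algC]_q) :
  twirl r1 r2 (u *m w ^t*) = \sum_(g in G) (r1 g *m u) *m (r2 g *m w) ^t*.
Proof. by apply: eq_bigr => g _; rewrite trmxC_mul !mulmxA. Qed.

Lemma twirl_irr p (r : mx_representation algC G p) (X : 'M[algC]_p) :
  mx_irreducible r -> unitary_repr r ->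
  twirl r r X = (#|G|%:R * \tr X / p%:R)%:M.
Proof.
move=> irr ur.
have cent : centgmx r (twirl r r X).
  by apply/centgmxP => g Gg; rewrite twirl_intertwines.
have /is_scalar_mxP [c tw_c] :=
  mx_abs_irr_cent_scalar (group_closure_closed_field irr) cent.
have tr_tw : \tr (twirl r r X) = #|G|%:R * \tr X.
  rewrite raddf_sum /= (eq_bigr (fun _ => \tr X)) ?sumr_const ?mulr_natl // => g Gg.
  by rewrite mxtrace_mulC mulmxA -adjmxE (mulmx1C (ur g Gg)) mul1mx.
have p_gt0 : (0 < p)%N by case/mx_irrP: irr.
move: tr_tw; rewrite tw_c mxtrace_scalar => <-.
by rewrite -[c *+ p]mulr_natr mulfK // pnatr_eq0 -lt0n.
Qed.

Lemma twirl_inequiv p q (r1 : mx_representation algC G p)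
    (r2 : mx_representation algC G q) X :
  mx_irreducible r1 -> mx_irreducible r2 -> unitary_repr r1 -> unitary_repr r2 ->
  ~ mx_rsim r1 r2 -> twirl r1 r2 X = 0.
Proof.
move=> irr1 irr2 ur1 ur2 r12; have [//|nz] := eqVneq (twirl r1 r2 X) 0.
case: r12; apply: (unitary_intertwiner_rsim irr1 irr2 ur1 ur2 _ nz) => g.
exact: twirl_intertwines ur2.
Qed.

End SchurOrthogonality.

Lemma lid_sum (T : finType) (F : T -> algC) x : \sum_y lid x y * F y = F x.
Proof.
rewrite (bigD1 x) //= big1 => [|y /negbTE yx]; first by rewrite /lid eqxx mul1r addr0.
by rewrite /lid eq_sym yx mul0r.
Qed.

Lemma lapply_comp (T1 T2 T3 : finType) (A : lmap T1 T2) (B : lmap T2 T3) v x :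
  lapply (lcomp A B) v x = lapply A (lapply B v) x.
Proof.
rewrite /lapply /lcomp; under [RHS]eq_bigr do rewrite mulr_sumr.
rewrite exchange_big; apply: eq_bigr => z _; rewrite mulr_suml.
by apply: eq_bigr => y _; rewrite mulrA.
Qed.

Lemma inner_isometry (T1 T2 : finType) (A : lmap T1 T2) (v v' : T2 -> algC) :
  (forall y y', lcomp (ladj A) A y y' = lid y y') ->
  inner (lapply A v) (lapply A v') = inner v v'.
Proof.
move=> isoA; rewrite /inner /lapply.
transitivity (\sum_y (v y)^* * \sum_y' lcomp (ladj A) A y y' * v' y'); last first.
  by apply: eq_bigr => y _; under eq_bigr do rewrite isoA; rewrite lid_sum.
rewrite /lcomp /ladj; under eq_bigr do rewrite rmorph_sum mulr_suml.
rewrite exchange_big; apply: eq_bigr => y _; rewrite mulr_sumr.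
under [RHS]eq_bigr do rewrite mulr_suml mulr_sumr.
rewrite exchange_big; apply: eq_bigr => y' _; rewrite mulr_sumr; apply: eq_bigr => x _.
by rewrite rmorphM; ring.
Qed.

Lemma coisometry_intertwine (T1 T2 : finType) (W : lmap T1 T2) (A : lmap T1 T1)
    (B : lmap T2 T2) :
  (forall x x', lcomp W (ladj W) x x' = lid x x') ->
  (forall y y', lcomp (ladj W) (lcomp A W) y y' = B y y') ->
  forall v x, lapply A (lapply W v) x = lapply W (lapply B v) x.
Proof.
move=> coisoW WAW v x; rewrite -[LHS]lapply_comp -[RHS]lapply_comp /lapply.
apply: eq_bigr => z _; congr (_ * _).
transitivity (\sum_x' lcomp W (ladj W) x x' * lcomp A W x' z).
  by under eq_bigr do rewrite coisoW; rewrite lid_sum.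
rewrite [RHS]/lcomp; under [RHS]eq_bigr do rewrite -WAW.
rewrite /lcomp /ladj; under [LHS]eq_bigr => x' _ do rewrite mulr_suml.
rewrite exchange_big; apply: eq_bigr => y _; rewrite mulr_sumr.
by apply: eq_bigr => x' _; rewrite mulrA.
Qed.

Lemma coisometry_tight_frame (T1 T2 S : finType) (P : pred S) (W : lmap T1 T2)
    (w : S -> T2 -> algC) :
  (forall x x', lcomp W (ladj W) x x' = lid x x') ->
  (forall y y', \sum_(s | P s) w s y * (w s y')^* = lid y y') ->
  forall x x', \sum_(s | P s) lapply W (w s) x * (lapply W (w s) x')^* = lid x x'.
Proof.
move=> coisoW frame x x'; rewrite -coisoW /lcomp /ladj /lapply.
transitivity (\sum_y W x y * \sum_y' (W x' y')^* * \sum_(s | P s) w s y * (w s y')^*).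
  under eq_bigr do rewrite rmorph_sum big_distrlr.
  rewrite exchange_big; apply: eq_bigr => y _; rewrite exchange_big mulr_sumr.
  apply: eq_bigr => y' _; rewrite !mulr_sumr.
  by apply: eq_bigr => s _; rewrite rmorphM /=; ring.
apply: eq_bigr => y _; congr (_ * _).
by under eq_bigr do rewrite frame mulrC; rewrite lid_sum.
Qed.

Lemma inner_rank1 (T : finType) (v z : T -> algC) :
  inner z (lapply (fun x y => v x * (v y)^*) z) = (inner v z)^* * inner v z.
Proof.
rewrite /inner /lapply rmorph_sum mulr_suml; apply: eq_bigr => x _.
rewrite rmorphM /= conjCK !mulr_sumr; apply: eq_bigr => y _; ring.
Qed.

Lemma psd_rank1 (T : finType) (v : T -> algC) : psd (fun x y => v x * (v y)^*).
Proof. by move=> z; rewrite inner_rank1 mulrC mul_conjC_ge0. Qed.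

Lemma tens_id_isometry n m (A : 'M[algC]_n) : unitary_mx A ->
  forall y y', lcomp (ladj (@tens_id n m A)) (tens_id A) y y' = lid y y'.
Proof.
move=> uA [y1 y2] [y1' y2']; rewrite /lcomp /ladj /tens_id /lid /=.
rewrite -(pair_bigA _ (fun x1 x2 =>
  (A x1 y1 * (x2 == y2)%:R)^* * (A x1 y1' * (x2 == y2')%:R))) /=.
transitivity (\sum_x1 (A x1 y1)^* * A x1 y1' * (y2 == y2')%:R).
  apply: eq_bigr => x1 _; rewrite (bigD1 y2) //= big1 => [|x2 /negbTE x2y2].
    by rewrite eqxx addr0 rmorphM /= conjC1; ring.
  by rewrite x2y2 !(mulr0, conjC0, mul0r).
rewrite -mulr_suml xpair_eqE -mulnb natrM; congr (_ * _).
have /matrixP /(_ y1 y1') := mulmx1C uA; rewrite !mxE => <-.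
by apply: eq_bigr => j _; rewrite !mxE.
Qed.

Definition dsum_ix (I : finType) (d : I -> nat) (i : I) (j k : 'I_(d i)) : dsum_idx d :=
  Tagged (fun i => ('I_(d i) * 'I_(d i))%type) (j, k).
Arguments dsum_ix {I d} i j k.

Definition dsum_block (I : finType) (d : I -> nat) (v : dsum_idx d -> algC) (i : I) :
  'M[algC]_(d i) := \matrix_(j, k) v (dsum_ix i j k).

Section DirectSum.

Variables (I : finType) (d : I -> nat).

Lemma big_dsum (F : dsum_idx d -> algC) :
  \sum_x F x = \sum_i \sum_j \sum_k F (dsum_ix i j k).
Proof.
transitivity (\sum_i \sum_(p : ('I_(d i) * 'I_(d i))%type) F (dsum_ix i p.1 p.2)).
  rewrite (@sig_big_dep _ _ _ I (fun i => ('I_(d i) * 'I_(d i))%type) xpredT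
    (fun i => xpredT) (fun i p => F (dsum_ix i p.1 p.2))).
  by apply: eq_bigr => -[i [j k]].
by apply: eq_bigr => i _; rewrite pair_bigA.
Qed.

Lemma dsum_ix_eq i j k j' k' :
  (dsum_ix i j k == dsum_ix i j' k' :> dsum_idx d) = (j == j') && (k == k').
Proof. by rewrite -tag_eqE /tag_eq /= eqxx tagged_asE xpair_eqE. Qed.

Lemma inner_dsum (v w : dsum_idx d -> algC) :
  inner v w = \sum_i \tr (dsum_block v i ^t* *m dsum_block w i).
Proof.
rewrite /inner big_dsum; apply: eq_bigr => i _; rewrite exchange_big.
by apply: eq_bigr => k _; rewrite !mxE; apply: eq_bigr => j _; rewrite !mxE.
Qed.

Lemma blk_tens_id_apply (A : forall i, 'M[algC]_(d i)) (v : dsum_idx d -> algC) i j k :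
  lapply (blk_tens_id A) v (dsum_ix i j k) = (A i *m dsum_block v i) j k.
Proof.
rewrite /lapply big_dsum (bigD1 i) //= [X in _ + X]big1 => [|i' i'i]; last first.
  rewrite big1 // => j' _; rewrite big1 // => k' _.
  by rewrite /blk_tens_id /= eq_sym (negbTE i'i) mul0r.
rewrite addr0 mxE; apply: eq_bigr => j' _.
rewrite (bigD1 k) //= [X in _ + X]big1 => [|k' k'k]; last first.
  by rewrite /blk_tens_id /= eqxx val_eqE eq_sym (negbTE k'k) mulr0 mul0r.
by rewrite /blk_tens_id /= eqxx /mxnat !valK eqxx mulr1 addr0 mxE.
Qed.

Lemma blk_orbit_tight_frame (gT : finGroupType) (G : {group gT})
    (rho : forall i, mx_representation algC G (d i)) (w : dsum_idx d -> algC) :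
  (forall i, mx_irreducible (rho i)) -> (forall i, unitary_repr (rho i)) ->
  (forall i i', mx_rsim (rho i) (rho i') -> i = i') ->
  (forall i, dsum_block w i ^t* *m dsum_block w i = ((d i)%:R / #|G|%:R)%:M) ->
  forall x x', \sum_(g in G) lapply (blk_tens_id (fun i => rho i g)) w x
                 * (lapply (blk_tens_id (fun i => rho i g)) w x')^* = lid x x'.
Proof.
move=> irr ur inequiv gram [i [j k]] [i' [j' k']].
change (existT _ i (j, k)) with (dsum_ix i j k).
change (existT _ i' (j', k')) with (dsum_ix i' j' k').
pose X := col k (dsum_block w i) *m (col k' (dsum_block w i')) ^t*.
transitivity (twirl (rho i) (rho i') X j j').
  rewrite twirl_rank1 summxE; apply: eq_bigr => g _.
  rewrite !blk_tens_id_apply !mxE big_ord1 !mxE.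
  by congr (_ * conjC _); apply: eq_bigr => l _; rewrite !mxE.
have [ii'|ii'] := eqVneq i i'; last first.
  rewrite twirl_inequiv // => [|/inequiv /eqP]; last by rewrite (negbTE ii').
  by rewrite mxE /lid; case: eqP => // /(congr1 tag) /eqP; rewrite (negbTE ii').
subst i'; rewrite twirl_irr // mxtrace_mulC /lid dsum_ix_eq.
set Y := dsum_block w i.
have -> : \tr ((col k' Y) ^t* *m col k Y) = (Y ^t* *m Y) k' k.
  by rewrite /mxtrace big_ord1 !mxE; apply: eq_bigr => l _; rewrite !mxE.
have d_gt0 : (0 < d i)%N by case/mx_irrP: (irr i).
have G_neq0 : #|G|%:R != 0 :> algC by rewrite pnatr_eq0 -lt0n cardG_gt0.
have d_neq0 : (d i)%:R != 0 :> algC by rewrite pnatr_eq0 -lt0n.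
rewrite gram !mxE eq_sym; case: (j =P j'); case: (k =P k') => _ _ //=;
  rewrite ?mulr0n ?mulr1n ?mulr0 ?mul0r //.
by field; apply/andP.
Qed.

Section PsiDsum.

Variables (Psi Phi : forall i, 'M[algC]_(d i)).
Hypotheses (d_gt0 : forall i, (0 < d i)%N).
Hypotheses (uPsi : forall i, unitary_mx (Psi i)) (uPhi : forall i, unitary_mx (Phi i)).

Lemma dsum_block_psi_dsum (a : I -> algC) i :
  dsum_block (psi_dsum a Psi Phi) i = (a i / sqrtC (d i)%:R) *: (Psi i *m (Phi i)^T).
Proof.
apply/matrixP => j k; rewrite !mxE; congr (_ * _).
by apply: eq_bigr => l _; rewrite mxE.
Qed.

Lemma gram_psi_dsum (b a : I -> algC) i :
  dsum_block (psi_dsum b Psi Phi) i ^t* *m dsum_block (psi_dsum a Psi Phi) i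
    = ((b i)^* * a i / (d i)%:R)%:M.
Proof.
rewrite !dsum_block_psi_dsum trmxCZ -scalemxAl -scalemxAr maxent_isometry //.
rewrite scalerA scalemx1; congr (_%:M).
rewrite rmorphM fmorphV /= [(sqrtC _)^*]geC0_conj ?sqrtC_ge0 ?ler0n //.
have sqrt_d0 : sqrtC (d i)%:R != 0 :> algC by rewrite sqrtC_eq0 pnatr_eq0 -lt0n d_gt0.
by rewrite -[in RHS](sqrtCK (d i)%:R); field.
Qed.

Lemma gram_psi_dsum_tight (b : I -> algC) (c : algC) i : 0 < c ->
  `|b i| = (d i)%:R / sqrtC c ->
  dsum_block (psi_dsum b Psi Phi) i ^t* *m dsum_block (psi_dsum b Psi Phi) i
    = ((d i)%:R / c)%:M.
Proof.
move=> c_gt0 normb; rewrite gram_psi_dsum [(b i)^* * _]mulrC -normCK normb.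
rewrite expr_div_n sqrtCK.
have d_neq0 : (d i)%:R != 0 :> algC by rewrite pnatr_eq0 -lt0n d_gt0.
by congr (_%:M); field; rewrite d_neq0 lt0r_neq0.
Qed.

Lemma inner_psi_dsum (b a : I -> algC) :
  inner (psi_dsum b Psi Phi) (psi_dsum a Psi Phi) = \sum_i (b i)^* * a i.
Proof.
rewrite inner_dsum; apply: eq_bigr => i _; rewrite gram_psi_dsum mxtrace_scalar.
by rewrite -[_ *+ _]mulr_natr divfK // pnatr_eq0 -lt0n d_gt0.
Qed.

End PsiDsum.

End DirectSum.

Theorem theorem1 (gT : finGroupType) (G : {group gT})
  (n m : nat) (U : mx_representation algC G n)
  (I : finType) (d : I -> nat) (rho : forall i : I, mx_representation algC G (d i))
  (W : lmap ('I_n * 'I_m)%type (dsum_idx d))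
  (Psi Phi : forall i : I, 'M[algC]_(d i))
  (a : I -> algC) (mu0 : I) :
  (* U is a unitary representation of G on H = C^n *)
  (forall g, g \in G -> unitary_mx (U g)) ->
  (* (rho i)_{i in I} is a complete family of pairwise inequivalent
     unitary irreducible representations of G (i.e. I = \hat G) *)
  (forall i, mx_irreducible (rho i)) ->
  (forall i g, g \in G -> unitary_mx (rho i g)) ->
  (forall i j, mx_rsim (rho i) (rho j) -> i = j) ->
  (forall k (r : mx_representation algC G k), mx_irreducible r ->
     exists i, mx_rsim r (rho i)) ->
  (* unitary identification H ⊗ R ≅ ⊕_μ H_μ ⊗ C^{d_μ} intertwining
     U_g ⊗ I_R with ⊕_μ U^μ_g ⊗ I *)
  lunitary W ->
  (forall g, g \in G -> forall x y,
     lcomp (ladj W) (lcomp (@tens_id n m (U g)) W) x y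
     = blk_tens_id (fun i => rho i g) x y) ->
  (* orthonormal bases {ψ^μ_j} and {φ^μ_j} (as columns) *)
  (forall i, unitary_mx (Psi i)) ->
  (forall i, unitary_mx (Phi i)) ->
  \sum_i `|a i| ^+ 2 = 1 ->
  (forall i, (d i)%:R * `|a i| <= (d mu0)%:R * `|a mu0|) ->
  (d mu0)%:R * `|a mu0| <= \sum_(i | i != mu0) (d i)%:R * `|a i| ->
  let psi := lapply W (psi_dsum a Psi Phi) in
  let u := fun g => lapply (@tens_id n m (U g)) psi in
  exists M : gT -> lmap ('I_n * 'I_m)%type ('I_n * 'I_m)%type,
    (forall g, g \in G -> psd (M g)) /\
    (forall x y, \sum_(g in G) M g x y = lid x y) /\
    (forall g, g \in G -> inner (u g) (lapply (M g) (u g)) = 0).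
Proof.
move=> uU irr urho inequiv _ [isoW coisoW] Wint uPsi uPhi _ a_max a_sum psi u.
have d_gt0 i : (0 < d i)%N by case/mx_irrP: (irr i).
have [y [y1 y0]] : exists y : I -> algC,
    (forall i, `|y i| = 1) /\ \sum_i y i * ((d i)%:R * a i) = 0.
  apply: (polygon_closure (i0 := mu0)) => [i|]; rewrite ?normrM ?normr_nat //.
  by under eq_bigr do rewrite normrM normr_nat.
pose b i := (y i)^* * (d i)%:R / sqrtC #|G|%:R.
have norm_b i : `|b i| = (d i)%:R / sqrtC #|G|%:R.
  by rewrite !normrM normfV normr_nat norm_conjC y1 ger0_norm ?sqrtC_ge0 ?ler0n ?mul1r.
pose v g := lapply (tens_id (U g)) (lapply W (psi_dsum b Psi Phi)).
exists (fun g x x' => v g x * (v g x')^*); split; [|split].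
- by move=> g _; apply: psd_rank1.
- move=> x x'; under eq_bigr => g Gg do
    rewrite /v !(coisometry_intertwine coisoW (Wint g Gg)).
  apply: (coisometry_tight_frame (w := fun g =>
    lapply (blk_tens_id (fun i => rho i g)) (psi_dsum b Psi Phi)) coisoW).
  apply: blk_orbit_tight_frame irr urho inequiv _ => i.
  by apply: gram_psi_dsum_tight => //; rewrite ?ltr0n ?cardG_gt0 ?norm_b.
move=> g Gg; rewrite inner_rank1 /v /u /psi inner_isometry ?inner_isometry //;
  last exact: tens_id_isometry (uU g Gg).
rewrite inner_psi_dsum //.
rewrite (_ : \sum_i _ = (\sum_i y i * ((d i)%:R * a i)) / sqrtC #|G|%:R).
  by rewrite y0 mul0r mulr0.
rewrite mulr_suml; apply: eq_bigr => i _; rewrite /b !rmorphM fmorphV /= conjCK.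
by rewrite conjC_nat geC0_conj ?sqrtC_ge0 ?ler0n //; ring.
Qed.
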